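(* Let $n\ge 3$ and let $l_1=l_2=\dots=l_n=l_\infty$. Then the element $(s_{1,n}s_{1,n-1})^{n(n+1)}\in J_n$ acts as the identity on $X(l_1,\dots,l_n,l_\infty)$.
   Context: Cactus group: $J_n$ is the group generated by $s_{p,q}$, $1\le p<q\le n$, subject to the relations $s_{p,q}^2=e$; $s_{p,q}s_{p',q'}=s_{p',q'}s_{p,q}$ if $[p,q]$ and $[p',q']$ are disjoint; $s_{p,q}s_{p',q'}s_{p,q}=s_{p+q-q',p+q-p'}$ if $p\le p'<q'\le q$. Arc diagrams: fix nonnegative integers $l_1,\dots,l_n,l_\infty$. On the boundary circle of a closed disc place $n+1$ marked positions: position $0$ (occupied by $z_\infty$) and positions $1,\dots,n$ following it clockwise. An arc diagram is a bijective assignment of labels $z_1,\dots,z_n$ to positions $1,\dots,n$ together with a finite collection of simple arcs in the disc, pairwise disjoint except at endpoints, each joining two distinct marked points, such that $z_j$ is an endpoint of exactly $l_j$ arcs ($j\in\{1,\dots,n,\infty\}$; $l_j$ is the valence). Parallel arcs are allowed; diagrams are up to isotopy, equivalently determined by the labelling and the number of arcs between each pair of marked points. $X(l_1,\dots,l_n,l_\infty)$ is the set of such diagrams. Action: $s_{p,q}$ ($1\le p<q\le n$) acts by cutting off positions $p,\dots,q$ with a chord $\ell$ (arcs isotoped to cross $\ell$ at most once), reflecting that region by the reflection reversing $\ell$ (label at position $p+t$ goes to position $q-t$, crossing points on $\ell$ reversed), leaving the rest unchanged and reconnecting arcs at $\ell$. Words act right to left; this is an action of $J_n$. *)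

From mathcomp Require Import all_boot.
Set Implicit Arguments. Unset Strict Implicit. Unset Printing Implicit Defensive.

(* Marked positions on the circle: 'I_n.+1, position 0 is the one of z_oo,
   positions 1..n follow clockwise.  Labels are also encoded in 'I_n.+1:
   label 0 = z_oo, label j = z_j (1 <= j <= n). *)

(* A raw diagram: a labelling (position |-> label) and arc multiplicities
   a (i,j) between positions i < j (entries with i >= j are required to be 0). *)
Definition diagram (n : nat) : Type :=
  ({ffun 'I_n.+1 -> 'I_n.+1} * {ffun 'I_n.+1 * 'I_n.+1 -> nat})%type.

Definition cnt n (a : {ffun 'I_n.+1 * 'I_n.+1 -> nat}) (i j : 'I_n.+1) : nat :=
  if i < j then a (i, j) else if j < i then a (j, i) else 0.

Definition valence n (a : {ffun 'I_n.+1 * 'I_n.+1 -> nat}) (i : 'I_n.+1) : nat :=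
  \sum_(j : 'I_n.+1) cnt a i j.

(* arcs can be drawn pairwise disjoint except at endpoints *)
Definition noncrossing n (a : {ffun 'I_n.+1 * 'I_n.+1 -> nat}) : bool :=
  [forall i : 'I_n.+1, forall k : 'I_n.+1, forall j : 'I_n.+1, forall m : 'I_n.+1,
    [&& i < k, k < j & j < m] ==> (a (i, j) == 0) || (a (k, m) == 0)].

(* D is an element of X(l_1,...,l_n,l_oo), where l : 'I_n.+1 -> nat, l 0 = l_oo *)
Definition is_diagram n (l : 'I_n.+1 -> nat) (D : diagram n) : bool :=
  [&& D.1 ord0 == ord0, injectiveb D.1,
      [forall i : 'I_n.+1, forall j : 'I_n.+1, (j <= i) ==> (D.2 (i, j) == 0)],
      noncrossing D.2 &
      [forall i : 'I_n.+1, valence D.2 i == l (D.1 i)]].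

Section Action.
Variables (n p q : nat).

Definition refl (i : nat) : nat := if (p <= i) && (i <= q) then p + q - i else i.
Definition insd (i : nat) : bool := (p <= i) && (i <= q).

(* outside positions, ordered along the chord l starting from its end between
   positions p-1 and p : p-1, ..., 1, 0, n, ..., q+1 *)
Definition outs : seq nat := rev (iota 0 p) ++ rev (iota q.+1 (n - q)).

(* arcs crossing the chord, as (inside end, outside end), listed in the order
   of their crossing points along the chord (from the p-1|p end) *)
Definition crossing (a : {ffun 'I_n.+1 * 'I_n.+1 -> nat}) : seq (nat * nat) :=
  flatten [seq flatten [seq nseq (cnt a (inord i) (inord j)) (i, j) | j <- outs]
          | i <- iota p (q - p).+1].

(* after reflecting the inside, the crossing order is reversed: the outside
   half at crossing point k gets joined to the reflected inside half that now
   sits at crossing point k *)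
Definition new_crossing (a : {ffun 'I_n.+1 * 'I_n.+1 -> nat}) : seq (nat * nat) :=
  let c := crossing a in
  zip (map snd c) (map (fun e => refl e.1) (rev c)).

Definition act_s (D : diagram n) : diagram n :=
  let a := D.2 in
  ([ffun x : 'I_n.+1 => D.1 (inord (refl x))],
   [ffun e : 'I_n.+1 * 'I_n.+1 =>
      let x := e.1 in let y := e.2 in
      if x < y then
        (if insd x && insd y then cnt a (inord (refl x)) (inord (refl y))
         else if ~~ insd x && ~~ insd y then a (x, y)
         else count (fun f : nat * nat => ((f.1 == x) && (f.2 == y))
                                         || ((f.1 == y) && (f.2 == x)))
                    (new_crossing a))
      else 0]).
End Action.

From mathcomp Require Import all_boot zify.
Set Implicit Arguments. Unset Strict Implicit. Unset Printing Implicit Defensive.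

(* For diagrams with all valences equal, s_{1,n} s_{1,n-1} acts as a rotation:
   the arc pattern turns by one step around all n+1 positions, while the labels
   z_1..z_n turn by one step around positions 1..n and z_oo stays at 0.  Equal
   valences at positions 0 and n are what make the reconnection performed by
   s_{1,n-1} fit this picture.  The two rotations have orders n+1 and n, so
   n(n+1) iterations act trivially. *)

Lemma eq_iter_in (T : Type) (P : T -> Prop) (f g : T -> T) :
  (forall x, P x -> P (g x)) -> (forall x, P x -> f x = g x) ->
  forall k x, P x -> iter k f x = iter k g x.
Proof.
move=> Pg fg k x Px.
have Pk j : P (iter j g x) by elim: j => //= j; apply: Pg.
by elim: k => //= k ->; apply: fg.
Qed.

Lemma flatten_cat_split (T : Type) (F G : nat -> seq T) (s : seq nat) :
  pairwise (fun i j => nilp (G i) || nilp (F j)) s ->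
  flatten [seq F i ++ G i | i <- s] =
  flatten [seq F i | i <- s] ++ flatten [seq G i | i <- s].
Proof.
elim: s => //= i s IH /andP[GiFs /IH ->].
case: (boolP (nilp (G i))) => [/nilP -> | /negbTE Gi]; first by rewrite cats0 catA.
suff -> : flatten [seq F j | j <- s] = [::] by rewrite cats0 -catA.
by elim: s GiFs {IH} => //= j s IHs; rewrite Gi /= => /andP[/nilP -> Fs]; rewrite IHs ?Gi.
Qed.

Definition arcs_to (o : nat) (f : nat -> nat) (s : seq nat) : seq (nat * nat) :=
  flatten [seq nseq (f i) (i, o) | i <- s].

Lemma count_arcs_to o f s (P : pred (nat * nat)) :
  count P (arcs_to o f s) = \sum_(i <- s | P (i, o)) f i.
Proof.
elim: s => [|i s IH]; first by rewrite big_nil.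
rewrite /arcs_to /= count_cat -/(arcs_to o f s) IH big_cons count_nseq.
by case: (P (i, o)); rewrite ?mul1n ?mul0n.
Qed.

Lemma map_snd_arcs_to o f s : map snd (arcs_to o f s) = nseq (size (arcs_to o f s)) o.
Proof.
elim: s => //= i s IH.
by rewrite map_cat -/(arcs_to o f s) IH size_cat nseqD map_nseq size_nseq.
Qed.

Lemma count_refl_arcs_to p q o f y : p <= y <= q ->
  count (pred1 y) [seq refl p q e.1 | e <- rev (arcs_to o f (index_iota p q.+1))]
  = f (p + q - y).
Proof.
move=> yb; rewrite count_map count_rev count_arcs_to big_nat_cond.
rewrite (eq_bigl (fun i => (p <= i < q.+1) && (i == p + q - y))); last first.
  by move=> i /=; rewrite /refl; case: ifP => /= h; apply/idP/idP; lia.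
by rewrite -big_nat_cond big_nat1_eq ifT //; lia.
Qed.

Definition joins (x y : nat) : pred (nat * nat) :=
  fun e => ((e.1 == x) && (e.2 == y)) || ((e.1 == y) && (e.2 == x)).

Lemma count_joins_zip_nseq m o x y t : x != y -> size t = m ->
  count (joins x y) (zip (nseq m o) t)
  = (o == x) * count (pred1 y) t + (o == y) * count (pred1 x) t.
Proof.
move=> /negbTE xy <-; rewrite /joins; elim: t => [|z t IH] /=; first by rewrite !muln0.
rewrite IH; case: (o =P x) => [ox|_]; case: (o =P y) => [oy|_] /=;
  rewrite ?mul1n ?mul0n ?orbF ?addn0 ?add0n //.
by move: xy; rewrite -ox oy eqxx.
Qed.

Definition cpred (m x : nat) : nat := if x is y.+1 then y else m.
Definition cpred_pos (m x : nat) : nat := if x is y.+1 then (cpred m.-1 y).+1 else 0.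

Lemma cpred_le m : {homo cpred m : x / x <= m}.
Proof. by case=> //= x; apply: ltnW. Qed.

Lemma cpred_pos_le m : 0 < m -> {homo cpred_pos m : x / x <= m}.
Proof. by move=> m_pos [|[|x]] //=; rewrite ?prednK //; lia. Qed.

Lemma cpred_inj m : {in [pred x | x <= m] &, injective (cpred m)}.
Proof. by move=> [|x] [|y]; rewrite !inE /=; lia. Qed.

Lemma cpred_pos_inj m : {in [pred x | x <= m] &, injective (cpred_pos m)}.
Proof. by move=> [|[|x]] [|[|y]]; rewrite !inE /=; lia. Qed.

Lemma cpred_mod m x : x <= m -> cpred m x = (x + m) %% m.+1.
Proof.
case: x => [|x] xm /=; first by rewrite modn_small.
by rewrite addSnnS modnDr modn_small // ltnS ltnW.
Qed.

Lemma iter_cpred m k x : x <= m -> iter k (cpred m) x = (x + k * m) %% m.+1.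
Proof.
move=> xm; elim: k => [|k /= ->]; first by rewrite addn0 modn_small.
rewrite cpred_mod; last by rewrite -ltnS ltn_pmod.
by rewrite modnDml mulSnr addnA.
Qed.

Lemma iter_cpred_period m k x : x <= m -> iter (k * m.+1) (cpred m) x = x.
Proof. by move=> xm; rewrite iter_cpred // mulnAC addnC modnMDl modn_small. Qed.

Lemma iter_cpred_pos_period m k x : 0 < m -> x <= m -> iter (m * k) (cpred_pos m) x = x.
Proof.
move=> m_pos; case: x => [_|x xm]; first by elim: (m * k) => //= j ->.
have -> : iter (m * k) (cpred_pos m) x.+1 = (iter (m * k) (cpred m.-1) x).+1.
  by elim: (m * k) => //= j ->.
by rewrite -(prednK m_pos) mulnC iter_cpred_period // -ltnS prednK.
Qed.

Lemma refl_le p q m : q <= m -> {homo refl p q : x / x <= m}.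
Proof. by move=> qm x xm; rewrite /refl; case: ifP => //; lia. Qed.

Lemma refl_refl_cpred_pos n x : 1 < n -> x <= n -> refl 1 n.-1 (refl 1 n x) = cpred_pos n x.
Proof.
move=> n1; case: x => [|[|x]] xn; rewrite /refl /=; repeat case: ifP => /=; lia.
Qed.

Lemma subn_refl_cpred n x : x <= n -> n - refl 1 n x = cpred n x.
Proof. by case: x => [|x] xn; rewrite /refl /=; repeat case: ifP => /=; lia. Qed.

Section Arcs.
Variable n : nat.
Implicit Type a : {ffun 'I_n.+1 * 'I_n.+1 -> nat}.

Lemma cnt_sym a i j : cnt a i j = cnt a j i.
Proof. by rewrite /cnt; case: ltngtP. Qed.

Lemma cnt_diag a i : cnt a i i = 0.
Proof. by rewrite /cnt ltnn. Qed.

Lemma cnt_inord a i j : i < j <= n -> cnt a (inord i) (inord j) = a (inord i, inord j).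
Proof. by move=> /andP[ij jn]; rewrite /cnt !inordK ?ij //; lia. Qed.

Lemma noncrossing_cnt a i k j m : noncrossing a -> i < k -> k < j -> j < m -> m <= n ->
  cnt a (inord i) (inord j) = 0 \/ cnt a (inord k) (inord m) = 0.
Proof.
move=> /forallP nc ik kj jm mn.
move/forallP/(_ (inord k))/forallP/(_ (inord j))/forallP/(_ (inord m)): (nc (inord i)).
rewrite !inordK; try lia.
rewrite ik kj jm /=; case/orP=> /eqP h; [left|right]; rewrite cnt_inord //; lia.
Qed.

Lemma valence_split a i : 0 < n ->
  valence a i = cnt a i (inord 0) + \sum_(1 <= j < n) cnt a i (inord j) + cnt a i (inord n).
Proof.
move=> n0; rewrite /valence (eq_bigr (fun j : 'I_n.+1 => cnt a i (inord j))); last first.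
  by move=> j _; rewrite inord_val.
by rewrite -(big_mkord xpredT (fun j => cnt a i (inord j))) big_nat_recr // big_ltn.
Qed.

Lemma sum_cnt_first_last a : 0 < n -> valence a (inord 0) = valence a (inord n) ->
  \sum_(1 <= i < n) cnt a (inord i) (inord 0) = \sum_(1 <= i < n) cnt a (inord i) (inord n).
Proof.
move=> n0; rewrite !valence_split // !cnt_diag (cnt_sym a (inord n)).
have sum_sym c : \sum_(1 <= j < n) cnt a c (inord j) = \sum_(1 <= j < n) cnt a (inord j) c.
  by apply: eq_bigr => j _; apply: cnt_sym.
by rewrite !sum_sym; lia.
Qed.

Definition pull (g : nat -> nat) a : {ffun 'I_n.+1 * 'I_n.+1 -> nat} :=
  [ffun e : 'I_n.+1 * 'I_n.+1 =>
     if e.1 < e.2 then cnt a (inord (g e.1)) (inord (g e.2)) else 0].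

Lemma cnt_pull g a (u v : 'I_n.+1) : cnt (pull g a) u v = cnt a (inord (g u)) (inord (g v)).
Proof.
rewrite {1}/cnt; case: ltngtP => [uv|vu|/val_inj->]; last by rewrite cnt_diag.
- by rewrite ffunE /= uv.
- by rewrite ffunE /= vu cnt_sym.
Qed.

Lemma inord_comp_inj (g : nat -> nat) :
  {homo g : x / x <= n} -> {in [pred x | x <= n] &, injective g} ->
  injective (fun x : 'I_n.+1 => inord (g x) : 'I_n.+1).
Proof.
move=> gn ginj x y /(congr1 val); rewrite /= !inordK ?ltnS ?gn ?leq_ord //.
by move/ginj => xy; apply/val_inj/xy; rewrite inE leq_ord.
Qed.

Lemma valence_pull g a i :
  {homo g : x / x <= n} -> {in [pred x | x <= n] &, injective g} ->
  valence (pull g a) i = valence a (inord (g i)).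
Proof.
move=> gn ginj; rewrite /valence [RHS](reindex_inj (inord_comp_inj gn ginj)) /=.
by apply: eq_bigr => j _; rewrite cnt_pull.
Qed.

Definition reindex (f g : nat -> nat) (D : diagram n) : diagram n :=
  ([ffun x : 'I_n.+1 => D.1 (inord (f x))], pull g D.2).

Lemma reindex_comp f g f' g' D : {homo f : x / x <= n} -> {homo g : x / x <= n} ->
  reindex f g (reindex f' g' D) = reindex (f' \o f) (g' \o g) D.
Proof.
move=> fn gn; congr (_, _); apply/ffunP => x; rewrite !ffunE /=.
  by rewrite inordK // ltnS fn ?leq_ord.
by case: ifP => // _; rewrite cnt_pull !inordK // ltnS gn ?leq_ord.
Qed.

Lemma eq_reindex f g f' g' D :
  {in [pred x | x <= n], f =1 f'} -> {in [pred x | x <= n], g =1 g'} ->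
  reindex f g D = reindex f' g' D.
Proof.
have le_n (x : 'I_n.+1) : (x : nat) \in [pred x | x <= n] by rewrite inE leq_ord.
move=> ff' gg'; congr (_, _); apply/ffunP => x; rewrite !ffunE ?ff' //.
by rewrite !gg'.
Qed.

Lemma reindex_id l D : is_diagram l D -> reindex id id D = D.
Proof.
case/and5P=> _ _ /forallP lower _ _; case: D lower => lab a /= lower.
congr (_, _); apply/ffunP; first by move=> x; rewrite ffunE inord_val.
move=> [u v]; rewrite ffunE /cnt /= !inord_val; case: ltnP => // vu.
by move/forallP: (lower u) => /(_ v) /implyP /(_ vu) /eqP.
Qed.

Lemma iter_reindex l f g D k : {homo f : x / x <= n} -> {homo g : x / x <= n} ->
  is_diagram l D -> iter k (reindex f g) D = reindex (iter k f) (iter k g) D.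
Proof.
move=> fn gn VD; elim: k => [|k /= ->]; first by rewrite (reindex_id VD).
by rewrite reindex_comp //; apply: eq_reindex => x _; rewrite /= -iterSr.
Qed.

Lemma crossing_last a : 0 < n ->
  crossing 1 n a = arcs_to 0 (fun i => cnt a (inord i) (inord 0)) (index_iota 1 n.+1).
Proof.
move=> n0; rewrite /crossing /outs /arcs_to /index_iota subnn !subn1 prednK //=.
by congr flatten; apply: eq_map => i /=; rewrite cats0.
Qed.

Lemma act_s_last D : 0 < n -> act_s 1 n D = reindex (refl 1 n) (refl 1 n) D.
Proof.
move=> n0; congr (_, _); apply/ffunP => -[u v]; rewrite !ffunE /=; case: ifP => // uv.
have in_v : insd 1 n v by rewrite /insd; have := leq_ord v; lia.
rewrite in_v; case: (posnP u) => [u0|u_pos]; last first.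
  by rewrite /insd u_pos leq_ord.
rewrite /insd u0 /= /new_crossing crossing_last // map_snd_arcs_to.
have v0 : (0 == v) = false by rewrite eq_sym gtn_eqF // -u0.
rewrite count_joins_zip_nseq ?v0 ?size_map ?size_rev //.
rewrite eqxx mul1n mul0n addn0 count_refl_arcs_to //.
by rewrite cnt_sym /refl -/(insd 1 n v) in_v.
Qed.

Lemma crossing_butlast a : 1 < n -> noncrossing a ->
  crossing 1 n.-1 a = arcs_to 0 (fun i => cnt a (inord i) (inord 0)) (index_iota 1 n)
                      ++ arcs_to n (fun i => cnt a (inord i) (inord n)) (index_iota 1 n).
Proof.
move=> n1 nc; rewrite /crossing /outs /arcs_to prednK ?(ltnW n1) //.
have -> : n - n.-1 = 1 by lia.
have -> : (n.-1 - 1).+1 = n - 1 by lia.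
rewrite -flatten_cat_split; first by congr flatten; apply: eq_map => i /=; rewrite cats0.
have: pairwise ltn (index_iota 1 n) by rewrite -(sorted_pairwise ltn_trans) iota_ltn_sorted.
apply: sub_in_pairwise (allss _) => i j; rewrite !mem_iota => /andP[i1 _] /andP[_ jn] ij.
have {}jn : j < n by lia.
rewrite /nilp !size_nseq (cnt_sym a (inord j)).
by have [->|->] := noncrossing_cnt nc i1 ij jn (leqnn n); rewrite ?orbT.
Qed.

(* Non-crossing puts the arcs ending at 0 before those ending at n along the cut,
   and equal valences at 0 and n make both runs equally long, so reversing the
   cut joins each arc towards 0 to the reflected inner end of an arc towards n
   and vice versa. *)
Lemma act_s_butlast D : 1 < n -> noncrossing D.2 ->
  valence D.2 (inord 0) = valence D.2 (inord n) ->
  act_s 1 n.-1 D = reindex (refl 1 n.-1) (subn n) D.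
Proof.
move=> n1 nc bal; congr (_, _); apply/ffunP => -[u v]; rewrite !ffunE /=; case: ifP => // uv.
have refl_in x : insd 1 n.-1 x -> refl 1 n.-1 x = n - x.
  by rewrite /refl -/(insd 1 n.-1 x) => ->; lia.
have le_v := leq_ord v.
case: (boolP (insd 1 n.-1 u && insd 1 n.-1 v)) => [/andP[in_u in_v]|not_in].
  by rewrite !refl_in.
case: (boolP (~~ insd 1 n.-1 u && ~~ insd 1 n.-1 v)) => [out|mixed].
  have [u0 vn] : u = 0 :> nat /\ v = n :> nat by move: out; rewrite /insd; lia.
  rewrite u0 vn subn0 subnn cnt_sym cnt_inord; last by rewrite leqnn andbT ltnW.
  by congr (D.2 (_, _)); apply: val_inj; rewrite /= inordK // ?ltnS.
have iota_n : index_iota 1 n = index_iota 1 n.-1.+1 by rewrite prednK // ltnW.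
rewrite /new_crossing crossing_butlast // iota_n map_cat !map_snd_arcs_to rev_cat map_cat.
set c0 := arcs_to 0 _ _; set cn := arcs_to n _ _.
have size_c : size c0 = size cn.
  by rewrite -!count_predT !count_arcs_to /= prednK ?sum_cnt_first_last // ltnW.
rewrite zip_cat; last by rewrite size_nseq size_map size_rev.
have u_ne_v : u != v :> nat by rewrite ltn_eqF.
rewrite count_cat !count_joins_zip_nseq // ?size_map ?size_rev //.
have [[u0 in_v] | [vn in_u]] : u = 0 :> nat /\ insd 1 n.-1 v \/ v = n :> nat /\ insd 1 n.-1 u.
  by move: not_in mixed; rewrite /insd; lia.
- have [v_pos v_lt] : 0 < v /\ v < n by move: in_v; rewrite /insd; lia.
  rewrite u0 eqxx.
  have [-> -> ->] : [/\ (0 == v) = false, (n == 0) = false & (n == v) = false].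
    by split; lia.
  rewrite !mul0n !addn0 mul1n count_refl_arcs_to // cnt_sym subn0 add1n prednK //.
  exact: ltnW.
- have [u_pos u_lt] : 0 < u /\ u < n by move: in_u; rewrite /insd; lia.
  rewrite vn eqxx.
  have [-> -> ->] : [/\ (0 == u) = false, (0 == n) = false & (n == u) = false].
    by split; lia.
  rewrite !mul0n !add0n mul1n count_refl_arcs_to // subnn add1n prednK //.
  exact: ltnW.
Qed.

Lemma noncrossing_pull_cpred a : noncrossing a -> noncrossing (pull (cpred n) a).
Proof.
move=> nc; apply/forallP => i; apply/forallP => k; apply/forallP => j; apply/forallP => m.
apply/implyP => /and3P[ik kj jm]; rewrite !ffunE /= (ltn_trans ik kj) (ltn_trans kj jm).
have cpred_pred x : 0 < x -> cpred n x = x.-1 by case: x.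
have le_m := leq_ord m.
have [kj' jm' mn] : [/\ k.-1 < j.-1, j.-1 < m.-1 & m.-1 < n] by split; lia.
rewrite (cpred_pred k) ?(cpred_pred j) ?(cpred_pred m) //; try lia.
case: (posnP i) => [i0|i_pos].
  rewrite i0 /= (cnt_sym a (inord n)).
  by have [->|->] := noncrossing_cnt nc kj' jm' mn (leqnn n); rewrite ?orbT.
have ik' : i.-1 < k.-1 by lia.
rewrite cpred_pred //.
by have [->|->] := noncrossing_cnt nc ik' kj' jm' (ltnW mn); rewrite ?orbT.
Qed.

Lemma valence_const (l : 'I_n.+1 -> nat) (D : diagram n) i :
  (forall j, l j = l ord0) -> is_diagram l D -> valence D.2 i = l ord0.
Proof. by move=> l_const /and5P[_ _ _ _ /forallP/(_ i)/eqP->]. Qed.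

Lemma is_diagram_rotate l D : 0 < n -> (forall i, l i = l ord0) -> is_diagram l D ->
  is_diagram l (reindex (cpred_pos n) (cpred n) D).
Proof.
move=> n0 l_const VD; have /and5P[lab0 /injectiveP lab_inj _ nc _] := VD.
apply/and5P; split.
- by rewrite ffunE (_ : inord 0 = ord0) //; apply: val_inj; rewrite /= inordK.
- apply/injectiveP => x y; rewrite !ffunE => /lab_inj.
  exact: (inord_comp_inj (cpred_pos_le n0) (@cpred_pos_inj n)).
- by apply/forallP => i; apply/forallP => j; apply/implyP => ji; rewrite ffunE /= ltnNge ji.
- exact: noncrossing_pull_cpred.
- apply/forallP => i; rewrite valence_pull ?(valence_const _ l_const VD) ?l_const //.
  + exact: cpred_le.
  + exact: cpred_inj.
Qed.

Lemma act_s_rotate l D : 1 < n -> (forall i, l i = l ord0) -> is_diagram l D ->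
  act_s 1 n (act_s 1 n.-1 D) = reindex (cpred_pos n) (cpred n) D.
Proof.
move=> n1 l_const VD; have n0 := ltnW n1.
have nc : noncrossing D.2 by case/and5P: VD.
rewrite act_s_butlast ?(valence_const _ l_const VD) // act_s_last // reindex_comp;
  try exact: refl_le.
apply: eq_reindex => x; rewrite inE => xn /=.
- exact: refl_refl_cpred_pos.
- exact: subn_refl_cpred.
Qed.
End Arcs.

Theorem mainTheorem16 (n : nat) (l : 'I_n.+1 -> nat) :
  3 <= n ->
  (forall i : 'I_n.+1, l i = l ord0) ->
  forall D : diagram n, is_diagram l D ->
  iter (n * n.+1) (fun E => @act_s n 1 n (@act_s n 1 n.-1 E)) D = D.
Proof.
move=> n3 l_const D VD; have n1 : 1 < n by apply: leq_trans n3.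
have n0 := ltnW n1.
rewrite (eq_iter_in (P := is_diagram l) (g := reindex (cpred_pos n) (cpred n))) //; first last.
- by move=> E; apply: act_s_rotate.
- by move=> E; apply: is_diagram_rotate.
rewrite (iter_reindex _ (cpred_pos_le n0) (@cpred_le n) VD) -[RHS](reindex_id VD).
apply: eq_reindex => x; rewrite inE => xn.
- exact: iter_cpred_pos_period.
- exact: iter_cpred_period.
Qed.
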